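(* Let $X$ be a compact $\ell_1$-convex subset of $\mathbb{R}^n$. Then for $0\le j\le k\le n$, \[ \sum_{P\in G_{n,k}} V_j(\pi_PX)=\binom{n-j}{n-k}V_j(X). \]
   Context: A subset $X\subseteq\mathbb{R}^n$ is $\ell_1$-convex if any two points $x,x'\in X$ are joined by a map $\gamma\colon[0,D]\to X$, $D=\sum_i|x_i-x'_i|$, with $\gamma(0)=x,\gamma(D)=x'$, which is distance-preserving for the $\ell_1$ metric $d(x,y)=\sum_i|x_i-y_i|$. $G_{n,k}$ is the set of $k$-dimensional coordinate subspaces of $\mathbb{R}^n$ (spanned by $k$ of the standard basis vectors), and $\pi_P$ is orthogonal projection onto $P$. For a compact $\ell_1$-convex set $Y$ in a coordinate subspace (or in $\mathbb{R}^n$), $V_j(Y)=\sum_{R\in G_{n,j}}\mathrm{Vol}_j(\pi_RY)$, the $j$th $\ell_1$-intrinsic volume, where $\mathrm{Vol}_j$ is Lebesgue measure on $R$; this value does not depend on the ambient coordinate space in which $Y$ is regarded. *)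

From mathcomp Require Import all_boot all_order all_algebra.
From mathcomp Require Import all_classical all_reals all_analysis.
Set Implicit Arguments. Unset Strict Implicit. Unset Printing Implicit Defensive.
Import Order.TTheory GRing.Theory Num.Theory.
Import numFieldNormedType.Exports.
Local Open Scope classical_set_scope.
Local Open Scope ring_scope.

(* Points of R^n are functions 'I_n -> R (product = Euclidean topology). *)

Definition l1dist (R : realType) (n : nat) (x y : 'I_n -> R) : R :=
  \sum_(i < n) `|x i - y i|.

Definition l1_convex (R : realType) (n : nat) (X : set ('I_n -> R)) : Prop :=
  forall x x', X x -> X x' ->
    exists gamma : R -> ('I_n -> R),
      [/\ gamma 0 = x, gamma (l1dist x x') = x',
          (forall s, 0 <= s <= l1dist x x' -> X (gamma s)) &
          (forall s t, 0 <= s <= l1dist x x' -> 0 <= t <= l1dist x x' ->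
             l1dist (gamma s) (gamma t) = `|s - t|)].

(* Orthogonal projection onto the coordinate subspace spanned by the
   basis vectors e_i, i \in P (a subset of R^n). *)
Definition proj_fun (R : realType) (n : nat) (P : {set 'I_n}) (x : 'I_n -> R)
  : 'I_n -> R := fun i => if i \in P then x i else 0.

Definition coord_proj (R : realType) (n : nat) (P : {set 'I_n}) (Y : set ('I_n -> R))
  : set ('I_n -> R) := proj_fun P @` Y.

Definition box (R : realType) (n : nat) (S : {set 'I_n})
  (c : option (('I_n -> R) * ('I_n -> R))) : set ('I_n -> R) :=
  match c with
  | None => set0
  | Some (a, b) => [set x | forall i, i \in S -> a i <= x i <= b i]
  end.

Definition box_vol (R : realType) (n : nat) (S : {set 'I_n})
  (c : option (('I_n -> R) * ('I_n -> R))) : \bar R :=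
  match c with
  | None => 0%E
  | Some (a, b) => (\prod_(i in S) Num.max (b i - a i) 0)%:E
  end.

(* Lebesgue (outer) measure Vol_|S| on the coordinate subspace R^S, applied
   to the coordinates in S of the points of A: the infimum of the total
   volume of countable covers by boxes. For A contained in the coordinate
   subspace spanned by S (the only case used), this is the |S|-dimensional
   Lebesgue measure of A inside that subspace (A compact, hence measurable). *)
Definition vol (R : realType) (n : nat) (S : {set 'I_n}) (A : set ('I_n -> R))
  : \bar R :=
  ereal_inf [set (\sum_(0 <= k <oo) box_vol S (c k))%E |
              c in [set c : nat -> option (('I_n -> R) * ('I_n -> R)) |
                    A `<=` \bigcup_k box S (c k)]].

Definition l1_intrinsic_volume (R : realType) (n j : nat) (Y : set ('I_n -> R))
  : \bar R :=
  (\sum_(Q : {set 'I_n} | #|Q| == j) vol Q (coord_proj Q Y))%E.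

From mathcomp Require Import all_boot all_order all_algebra.
From mathcomp Require Import all_classical all_reals all_analysis.
From mathcomp Require Import zify.
Set Implicit Arguments. Unset Strict Implicit. Unset Printing Implicit Defensive.
Import Order.TTheory GRing.Theory Num.Theory.
Import numFieldNormedType.Exports.
Local Open Scope classical_set_scope.
Local Open Scope ring_scope.

(* Only the projection structure matters: for Q \subset P, projecting onto P
   and then onto Q is projecting onto Q, while for Q not contained in P the
   set pi_Q (pi_P X) lies in a hyperplane {x_i = 0}, i \in Q, of the subspace
   R^Q and has volume 0.  Hence the left-hand side is the sum of the
   Vol_j(pi_Q X), each counted once for every k-set P containing the j-set Q,
   and there are C(n - j, n - k) of those. *)

Lemma card_supersets (T : finType) (Q : {set T}) (k : nat) : (k <= #|T|)%N ->
  #|[set P : {set T} | Q \subset P & #|P| == k]| = 'C(#|T| - #|Q|, #|T| - k).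
Proof.
move=> kT; have cardQC : #|~: Q| = (#|T| - #|Q|)%N by rewrite cardsCs finset.setCK.
rewrite -cardQC -cards_draws -(card_preimset _ (@finset.setC_inj T)).
congr #|pred_of_set _|; apply/setP => P; rewrite !inE finset.subsetC; congr andb.
by apply/eqP/eqP; have := cardsC P; lia.
Qed.

Lemma coord_proj_comp (R : realType) n (Q P : {set 'I_n}) (X : set ('I_n -> R)) :
  Q \subset P -> coord_proj Q (coord_proj P X) = coord_proj Q X.
Proof.
move=> sQP; rewrite /coord_proj image_comp; congr image.
apply/funext => x; apply/funext => i; rewrite /proj_fun /=.
by case: ifP => // iQ; rewrite (fintype.subsetP sQP _ iQ).
Qed.

Lemma vol_ge0 (R : realType) n (S : {set 'I_n}) (A : set ('I_n -> R)) :
  (0 <= vol S A)%E.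
Proof.
apply: le_ereal_inf_tmp => _ [c _ <-]; apply: nneseries_ge0 => m _ _.
case: (c m) => [[a b]|] //=; rewrite lee_fin; apply: prodr_ge0 => i _.
by rewrite le_max lexx orbT.
Qed.

(* Cover A by the boxes [-m, m]^(S \ {i0}) x {0}, all of volume 0. *)
Lemma vol_coord_hyperplane (R : realType) n (S : {set 'I_n}) (i0 : 'I_n)
    (A : set ('I_n -> R)) :
  i0 \in S -> (forall x, A x -> x i0 = 0) -> vol S A = 0%E.
Proof.
move=> i0S A0; apply/eqP; rewrite eq_le vol_ge0 andbT.
pose r (m : nat) i : R := if i == i0 then 0 else m%:R.
apply: ereal_inf_lbound; exists (fun m => Some (fun i => - r m i, r m)); last first.
  apply: eseries0 => m _ _ /=.
  by rewrite (bigD1 i0) //= /r eqxx oppr0 subr0 maxxx mul0r.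
move=> x Ax; have x_ge0 : 0 <= \sum_(i < n) `|x i| by apply: sumr_ge0.
exists (Num.bound (\sum_(i < n) `|x i|)) => //= i _.
rewrite /r; case: eqP => [->|_]; first by rewrite oppr0 A0 // lexx.
rewrite -ler_norml; apply: le_trans (ltW (archi_boundP x_ge0)).
by rewrite (bigD1 i) //= lerDl sumr_ge0.
Qed.

Lemma vol_coord_proj_proj (R : realType) n (Q P : {set 'I_n})
    (X : set ('I_n -> R)) :
  vol Q (coord_proj Q (coord_proj P X)) =
  if Q \subset P then vol Q (coord_proj Q X) else 0%E.
Proof.
case: ifPn => [/coord_proj_comp -> //|/fintype.subsetPn[i0 i0Q i0P]].
apply: (vol_coord_hyperplane i0Q) => _ [_ [x _ <-] <-].
by rewrite /proj_fun i0Q (negbTE i0P).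
Qed.

Theorem theorem7p2 (R : realType) (n j k : nat) (X : set ('I_n -> R)) :
  @compact {ptws 'I_n -> R} X -> l1_convex X -> (j <= k <= n)%N ->
  (\sum_(P : {set 'I_n} | #|P| == k) l1_intrinsic_volume j (coord_proj P X))%E
  = (('C(n - j, n - k))%:R%:E * l1_intrinsic_volume j X)%E.
Proof.
move=> _ _ /andP[_ kn]; rewrite /l1_intrinsic_volume.
rewrite ge0_sume_distrr => [|Q _]; last exact: vol_ge0.
under eq_bigr => P _ do under eq_bigr => Q _ do rewrite vol_coord_proj_proj.
rewrite exchange_big /=; apply: eq_bigr => Q /eqP cardQ.
have cardP : #|[set P : {set 'I_n} | Q \subset P & #|P| == k]| = 'C(n - j, n - k).
  by rewrite card_supersets card_ord ?cardQ.
rewrite -big_mkcondr /= mule_natl -cardP.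
transitivity (\sum_(P in [set P : {set 'I_n} | Q \subset P & #|P| == k])
                vol Q (coord_proj Q X))%E.
  by apply: eq_bigl => P; rewrite inE andbC.
by rewrite sumr_const.
Qed.
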